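(* The theory $\mathsf{Seq}$ is an extension of the theory $\mathsf{WSeq}$: for every $\mathcal{L}$-formula $\phi$, if $\mathsf{WSeq}\vdash\phi$ then $\mathsf{Seq}\vdash\phi$.
   Context: $\mathcal{L}=\{e,\vdash,\circ\}$ with $e$ a constant and $\vdash$ (infix), $\circ$ binary function symbols. $\mathsf{Seq}$ has axioms: ($\mathsf{Seq}_1$) $\forall xy[x\vdash y\neq e]$; ($\mathsf{Seq}_2$) $\forall x_1x_2y_1y_2[x_1\vdash x_2=y_1\vdash y_2\rightarrow(x_1=y_1\wedge x_2=y_2)]$; ($\mathsf{Seq}_3$) $\forall x[x\circ e=x]$; ($\mathsf{Seq}_4$) $\forall xyz[x\circ(y\vdash z)=(x\circ y)\vdash z]$; ($\mathsf{Seq}_5$) $\forall x[x=e\vee\exists yz[x=y\vdash z]]$. Sequences: $()$ is a sequence, and for $n>0$, if $s_1,\ldots,s_n$ are sequences then $(s_1,\ldots,s_n)$ is one. Sequerals: $\overline{()}=e$, $\overline{(s_1,\ldots,s_n)}=(\ldots((e\vdash\overline{s_1})\vdash\overline{s_2})\ldots)\vdash\overline{s_n}$. $x\sqsubseteq t$ abbreviates $\exists y[x\circ y=t]$. $\mathsf{WSeq}$ has axiom schemes: ($\mathsf{WSeq}_1$) $\overline{s}\neq\overline{t}$ for distinct sequences $s,t$; ($\mathsf{WSeq}_2$) $\overline{(s_1,\ldots,s_n)}\circ\overline{(t_1,\ldots,t_m)}=\overline{(s_1,\ldots,s_n,t_1,\ldots,t_m)}$; ($\mathsf{WSeq}_3$)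 $\forall x[x\sqsubseteq\overline{s}\rightarrow\bigvee_{t\in I(s)}x=\overline{t}]$ where $I(s)$ is the set of initial segments of $s$. *)

From Stdlib Require Import List.
Import ListNotations.

Inductive term : Type :=
| var : nat -> term
| e : term
| turn : term -> term -> term
| comp : term -> term -> term.

Inductive form : Type :=
| Eq : term -> term -> form
| Bot : form
| Imp : form -> form -> form
| And : form -> form -> form
| Or : form -> form -> form
| All : form -> form
| Ex : form -> form.

Definition Not (A : form) : form := Imp A Bot.

Fixpoint tsubst (sigma : nat -> term) (t : term) : term :=
  match t with
  | var n => sigma n
  | e => e
  | turn a b => turn (tsubst sigma a) (tsubst sigma b)
  | comp a b => comp (tsubst sigma a) (tsubst sigma b)
  end.

Definition shift : nat -> term := fun n => var (S n).

Definition scons (t : term) (sigma : nat -> term) : nat -> term :=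
  fun n => match n with 0 => t | S k => sigma k end.

Definition up (sigma : nat -> term) : nat -> term :=
  scons (var 0) (fun n => tsubst shift (sigma n)).

Fixpoint fsubst (sigma : nat -> term) (A : form) : form :=
  match A with
  | Eq s t => Eq (tsubst sigma s) (tsubst sigma t)
  | Bot => Bot
  | Imp A B => Imp (fsubst sigma A) (fsubst sigma B)
  | And A B => And (fsubst sigma A) (fsubst sigma B)
  | Or A B => Or (fsubst sigma A) (fsubst sigma B)
  | All A => All (fsubst (up sigma) A)
  | Ex A => Ex (fsubst (up sigma) A)
  end.

Definition inst (t : term) (A : form) : form := fsubst (scons t var) A.

Inductive nd : list form -> form -> Prop :=
| nd_ax G A : In A G -> nd G A
| nd_impI G A B : nd (A :: G) B -> nd G (Imp A B)
| nd_impE G A B : nd G (Imp A B) -> nd G A -> nd G B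
| nd_botE G A : nd G Bot -> nd G A
| nd_dne G A : nd G (Not (Not A)) -> nd G A
| nd_andI G A B : nd G A -> nd G B -> nd G (And A B)
| nd_andE1 G A B : nd G (And A B) -> nd G A
| nd_andE2 G A B : nd G (And A B) -> nd G B
| nd_orI1 G A B : nd G A -> nd G (Or A B)
| nd_orI2 G A B : nd G B -> nd G (Or A B)
| nd_orE G A B C : nd G (Or A B) -> nd (A :: G) C -> nd (B :: G) C -> nd G C
| nd_allI G A : nd (map (fsubst shift) G) A -> nd G (All A)
| nd_allE G A t : nd G (All A) -> nd G (inst t A)
| nd_exI G A t : nd G (inst t A) -> nd G (Ex A)
| nd_exE G A B : nd G (Ex A) -> nd (A :: map (fsubst shift) G) (fsubst shift B) -> nd G B
| nd_refl G t : nd G (Eq t t)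
| nd_leibniz G A s t : nd G (Eq s t) -> nd G (inst s A) -> nd G (inst t A).

Definition proves (T : form -> Prop) (phi : form) : Prop :=
  exists G : list form, (forall psi, In psi G -> T psi) /\ nd G phi.

Definition Seq1 : form := All (All (Not (Eq (turn (var 1) (var 0)) e))).
Definition Seq2 : form :=
  All (All (All (All
    (Imp (Eq (turn (var 3) (var 2)) (turn (var 1) (var 0)))
         (And (Eq (var 3) (var 1)) (Eq (var 2) (var 0))))))).
Definition Seq3 : form := All (Eq (comp (var 0) e) (var 0)).
Definition Seq4 : form :=
  All (All (All (Eq (comp (var 2) (turn (var 1) (var 0)))
                    (turn (comp (var 2) (var 1)) (var 0))))).
Definition Seq5 : form :=
  All (Or (Eq (var 0) e) (Ex (Ex (Eq (var 2) (turn (var 1) (var 0)))))).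

Definition SeqAx (phi : form) : Prop :=
  phi = Seq1 \/ phi = Seq2 \/ phi = Seq3 \/ phi = Seq4 \/ phi = Seq5.

(* node [] = (), node [s1;...;sn] = (s1,...,sn) *)
Inductive sequence : Type := node : list sequence -> sequence.

Fixpoint numeral (s : sequence) : term :=
  match s with
  | node l =>
      (fix go (acc : term) (l : list sequence) : term :=
         match l with
         | [] => acc
         | x :: r => go (turn acc (numeral x)) r
         end) e l
  end.

Definition init_segs (s : sequence) : list sequence :=
  match s with
  | node l => map (fun k => node (firstn k l)) (seq 0 (S (length l)))
  end.

Definition bigOr (l : list form) : form := fold_right Or Bot l.

Definition WSeq1 (s t : sequence) : form := Not (Eq (numeral s) (numeral t)).
Definition WSeq2 (l1 l2 : list sequence) : form :=
  Eq (comp (numeral (node l1)) (numeral (node l2))) (numeral (node (l1 ++ l2))).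
(* forall x [ (exists y, x o y = s) -> \/_{t in I(s)} x = t ] *)
Definition WSeq3 (s : sequence) : form :=
  All (Imp (Ex (Eq (comp (var 1) (var 0)) (numeral s)))
           (bigOr (map (fun t => Eq (var 0) (numeral t)) (init_segs s)))).

Definition WSeqAx (phi : form) : Prop :=
  (exists s t, s <> t /\ phi = WSeq1 s t) \/
  (exists l1 l2, phi = WSeq2 l1 l2) \/
  (exists s, phi = WSeq3 s).

(* A sequeral is built from e by
   right-appending with |-, so:
   - distinct sequerals are refuted by induction on the sequences, using that
     e is not of the form a |- b (Seq1) and that |- is injective (Seq2);
   - the concatenation equations WSeq2 follow by induction on the right factor
     from Seq3 and Seq4;
   - for WSeq3, Seq5 splits y into e or u |- v; in the second case Seq4 and Seq2
     reduce x o (u |- v) = (s1,...,sn) to x o u = (s1,...,s(n-1)), and induction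
     applies.
   A Seq-proof of phi is then obtained by cutting these derivations into the
   given WSeq-proof. *)
From Stdlib Require Import List Lia Classical.
Import ListNotations.

Lemma tsubst_comp s t u : tsubst s (tsubst t u) = tsubst (fun n => tsubst s (t n)) u.
Proof. induction u; simpl; congruence. Qed.

Lemma tsubst_ext s t u : (forall n, s n = t n) -> tsubst s u = tsubst t u.
Proof. intro H; induction u; simpl; congruence. Qed.

Lemma tsubst_id u : tsubst var u = u.
Proof. induction u; simpl; congruence. Qed.

Lemma tsubst_scons_shift u s t : tsubst (scons u s) (tsubst shift t) = tsubst s t.
Proof. rewrite tsubst_comp. apply tsubst_ext. reflexivity. Qed.

Lemma tsubst_up_shift s t : tsubst (up s) (tsubst shift t) = tsubst shift (tsubst s t).
Proof. rewrite !tsubst_comp. apply tsubst_ext. reflexivity. Qed.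

Ltac simpl_inst H :=
  unfold inst in H; simpl in H;
  repeat rewrite ?tsubst_up_shift, ?tsubst_scons_shift, ?tsubst_id in H.

Lemma nd_weaken G G' A : nd G A -> incl G G' -> nd G' A.
Proof.
  intros H; revert G'; induction H; intros G' Hi; try solve [econstructor; eauto].
  - apply nd_impI, IHnd, incl_cons; [now left | now apply incl_tl].
  - apply nd_orE with A B; auto.
    + apply IHnd2, incl_cons; [now left | now apply incl_tl].
    + apply IHnd3, incl_cons; [now left | now apply incl_tl].
  - apply nd_allI, IHnd, incl_map, Hi.
  - apply nd_exE with A; auto.
    apply IHnd2, incl_cons; [now left | apply incl_tl, incl_map, Hi].
Qed.

Fixpoint imps (G : list form) (B : form) : form :=
  match G with [] => B | A :: G' => imps G' (Imp A B) end.

Lemma nd_imps_intro G B : nd G B -> nd [] (imps G B).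
Proof. revert B; induction G; simpl; intros B H; auto using nd_impI. Qed.

Lemma nd_imps_elim D G B :
  (forall A, In A G -> nd D A) -> nd D (imps G B) -> nd D B.
Proof.
  revert B; induction G as [|A G IH]; simpl; intros B HG H; auto.
  apply IH in H; [|now auto]. eapply nd_impE; eauto.
Qed.

(* [nd] has no substitution lemma for contexts, so the hypotheses are
   discharged as implications instead. *)
Lemma nd_cut G D A : nd G A -> (forall B, In B G -> nd D B) -> nd D A.
Proof.
  intros H HG. apply nd_imps_elim with G; auto.
  apply nd_weaken with []; [now apply nd_imps_intro | intros x []].
Qed.

Lemma nd_eq_sym G s t : nd G (Eq s t) -> nd G (Eq t s).
Proof.
  intro H. pose proof (nd_leibniz G (Eq (var 0) (tsubst shift s)) s t H) as H1.
  simpl_inst H1. apply H1, nd_refl.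
Qed.

Lemma nd_eq_trans G a b c : nd G (Eq a b) -> nd G (Eq b c) -> nd G (Eq a c).
Proof.
  intros H H'. pose proof (nd_leibniz G (Eq (tsubst shift a) (var 0)) b c H') as H1.
  simpl_inst H1. auto.
Qed.

Lemma nd_turn_congl G a b c : nd G (Eq a b) -> nd G (Eq (turn a c) (turn b c)).
Proof.
  intro H.
  pose proof (nd_leibniz G (Eq (turn (tsubst shift a) (tsubst shift c))
                               (turn (var 0) (tsubst shift c))) a b H) as H1.
  simpl_inst H1. apply H1, nd_refl.
Qed.

Lemma nd_comp_congr G a b c : nd G (Eq a b) -> nd G (Eq (comp c a) (comp c b)).
Proof.
  intro H.
  pose proof (nd_leibniz G (Eq (comp (tsubst shift c) (tsubst shift a))
                               (comp (tsubst shift c) (var 0))) a b H) as H1.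
  simpl_inst H1. apply H1, nd_refl.
Qed.

Lemma nd_bigOr_intro G A L : In A L -> nd G A -> nd G (bigOr L).
Proof.
  induction L as [|B L IH]; simpl; [tauto|].
  intros [<- | HA] H; auto using nd_orI1, nd_orI2.
Qed.

Lemma nd_bigOr_incl G L1 L2 : incl L1 L2 -> nd G (bigOr L1) -> nd G (bigOr L2).
Proof.
  revert G; induction L1 as [|A L1 IH]; simpl; intros G Hi H; [now apply nd_botE|].
  apply nd_orE with (1 := H).
  - apply nd_bigOr_intro with A; [apply Hi; now left | now apply nd_ax; left].
  - apply IH; [now apply incl_cons_inv in Hi | now apply nd_ax; left].
Qed.

Definition seq_axioms : list form := [Seq1; Seq2; Seq3; Seq4; Seq5].

Lemma seq_axioms_shift : map (fsubst shift) seq_axioms = seq_axioms.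
Proof. reflexivity. Qed.

Lemma incl_seq_axioms_shift G :
  incl seq_axioms G -> incl seq_axioms (map (fsubst shift) G).
Proof. intro HG. rewrite <- seq_axioms_shift. now apply incl_map. Qed.

Section SeqAxioms.

Variable G : list form.
Hypothesis HG : incl seq_axioms G.

Ltac seq_axiom := apply nd_ax, HG; cbn; tauto.

Lemma nd_Seq1 a b : nd G (Not (Eq (turn a b) e)).
Proof.
  assert (H : nd G Seq1) by seq_axiom.
  pose proof (nd_allE _ _ b (nd_allE _ _ a H)) as H1. simpl_inst H1. exact H1.
Qed.

Lemma nd_Seq2 a b c d :
  nd G (Imp (Eq (turn a b) (turn c d)) (And (Eq a c) (Eq b d))).
Proof.
  assert (H : nd G Seq2) by seq_axiom.
  pose proof (nd_allE _ _ d (nd_allE _ _ c (nd_allE _ _ b (nd_allE _ _ a H)))) as H1.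
  simpl_inst H1. exact H1.
Qed.

Lemma nd_Seq3 a : nd G (Eq (comp a e) a).
Proof.
  assert (H : nd G Seq3) by seq_axiom.
  pose proof (nd_allE _ _ a H) as H1. simpl_inst H1. exact H1.
Qed.

Lemma nd_Seq4 a b c : nd G (Eq (comp a (turn b c)) (turn (comp a b) c)).
Proof.
  assert (H : nd G Seq4) by seq_axiom.
  pose proof (nd_allE _ _ c (nd_allE _ _ b (nd_allE _ _ a H))) as H1.
  simpl_inst H1. exact H1.
Qed.

Lemma nd_Seq5 a :
  nd G (Or (Eq a e)
           (Ex (Ex (Eq (tsubst shift (tsubst shift a)) (turn (var 1) (var 0)))))).
Proof.
  assert (H : nd G Seq5) by seq_axiom.
  pose proof (nd_allE _ _ a H) as H1. simpl_inst H1. exact H1.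
Qed.

(* In the second premise, [var 1 |- var 0] is the pair introduced by the two
   existential eliminations, everything else being shifted past it. *)
Lemma nd_Seq5_cases y C :
  nd (Eq y e :: G) C ->
  nd (Eq (tsubst shift (tsubst shift y)) (turn (var 1) (var 0))
        :: map (fsubst shift) (map (fsubst shift) G))
     (fsubst shift (fsubst shift C)) ->
  nd G C.
Proof.
  intros He Hturn. apply nd_orE with (1 := nd_Seq5 y); [exact He|].
  eapply nd_exE; [apply nd_ax; now left|].
  eapply nd_exE; [apply nd_ax; now left|].
  apply nd_weaken with (1 := Hturn), incl_cons; [now left|].
  apply incl_tl, incl_map, incl_tl, incl_map, incl_tl, incl_refl.
Qed.

Lemma nd_comp_turn_eq x y u v n :
  nd G (Eq y (turn u v)) -> nd G (Eq (comp x y) n) ->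
  nd G (Eq (turn (comp x u) v) n).
Proof.
  intros Hy Hn. apply nd_eq_trans with (comp x (turn u v)).
  - apply nd_eq_sym, nd_Seq4.
  - apply nd_eq_trans with (comp x y); [now apply nd_comp_congr, nd_eq_sym | exact Hn].
Qed.

End SeqAxioms.

Fixpoint sequence_nested_ind (P : sequence -> Prop)
    (H : forall l, Forall P l -> P (node l)) (s : sequence) : P s :=
  match s with
  | node l =>
      H l ((fix all_P (l : list sequence) : Forall P l :=
              match l with
              | [] => Forall_nil P
              | x :: r => Forall_cons x (sequence_nested_ind P H x) (all_P r)
              end) l)
  end.

Lemma numeral_node l :
  numeral (node l) = fold_left (fun acc x => turn acc (numeral x)) l e.
Proof. simpl. generalize e. induction l; simpl; auto. Qed.

Lemma numeral_snoc l a : numeral (node (l ++ [a])) = turn (numeral (node l)) (numeral a).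
Proof. rewrite !numeral_node, fold_left_app. reflexivity. Qed.

Lemma tsubst_numeral sigma s : tsubst sigma (numeral s) = numeral s.
Proof.
  induction s as [l Hl] using sequence_nested_ind. rewrite numeral_node.
  change e with (tsubst sigma e) at 2. generalize e.
  induction Hl as [|x l Hx Hl IH]; intro acc; simpl; [reflexivity|].
  rewrite IH. simpl. now rewrite Hx.
Qed.

Lemma init_segs_self l : In (node l) (init_segs (node l)).
Proof.
  apply in_map_iff. exists (length l). rewrite firstn_all.
  split; [reflexivity | apply in_seq; lia].
Qed.

Lemma init_segs_snoc_incl l a : incl (init_segs (node l)) (init_segs (node (l ++ [a]))).
Proof.
  intros t Ht. apply in_map_iff in Ht as [k [<- Hk]]. apply in_seq in Hk.
  apply in_map_iff. exists k. split.
  - rewrite firstn_app. replace (k - length l) with 0 by lia. now rewrite app_nil_r.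
  - apply in_seq. rewrite length_app. simpl. lia.
Qed.

Definition init_seg_disj (x : term) (s : sequence) : form :=
  bigOr (map (fun t => Eq x (numeral t)) (init_segs s)).

Lemma fsubst_init_seg_disj sigma x s :
  fsubst sigma (init_seg_disj x s) = init_seg_disj (tsubst sigma x) s.
Proof.
  unfold init_seg_disj. induction (init_segs s); simpl; auto.
  now rewrite IHl, tsubst_numeral.
Qed.

Lemma init_seg_disj_snoc G x l a :
  nd G (init_seg_disj x (node l)) -> nd G (init_seg_disj x (node (l ++ [a]))).
Proof.
  apply nd_bigOr_incl, incl_map, init_segs_snoc_incl.
Qed.

Lemma nd_WSeq1 s : forall G t, incl seq_axioms G -> s <> t -> nd G (WSeq1 s t).
Proof.
  induction s as [ls Hls] using sequence_nested_ind. intros G [lt].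
  revert Hls lt G. unfold WSeq1.
  induction ls as [|a ls IH] using rev_ind; intros Hls lt G HG Hne;
    destruct lt as [|b lt _] using rev_ind; rewrite ?numeral_snoc.
  - congruence.
  - apply nd_impI. eapply nd_impE; [now apply nd_Seq1, incl_tl|].
    apply nd_eq_sym, nd_ax. now left.
  - apply nd_impI. eapply nd_impE; [now apply nd_Seq1, incl_tl|].
    apply nd_ax. now left.
  - apply Forall_app in Hls as [Hls Ha]. inversion_clear Ha as [| ? ? IHa _].
    apply nd_impI.
    assert (HG' : incl seq_axioms (Eq (turn (numeral (node ls)) (numeral a))
                                      (turn (numeral (node lt)) (numeral b)) :: G))
      by now apply incl_tl.
    assert (Hsplit : nd _ (And (Eq (numeral (node ls)) (numeral (node lt)))
                               (Eq (numeral a) (numeral b))))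
      by (eapply nd_impE; [apply nd_Seq2, HG' | apply nd_ax; now left]).
    destruct (classic (a = b)) as [<- | Hab].
    + eapply nd_impE; [apply IH; [exact Hls | exact HG' |] | exact (nd_andE1 _ _ _ Hsplit)].
      intros [= ->]. now apply Hne.
    + eapply nd_impE; [apply IHa; [exact HG' | exact Hab] | exact (nd_andE2 _ _ _ Hsplit)].
Qed.

Lemma nd_WSeq2 G l1 l2 : incl seq_axioms G -> nd G (WSeq2 l1 l2).
Proof.
  intro HG. unfold WSeq2. induction l2 as [|x l IH] using rev_ind.
  - rewrite app_nil_r. now apply nd_Seq3.
  - rewrite app_assoc, !numeral_snoc.
    eapply nd_eq_trans; [now apply nd_Seq4 | now apply nd_turn_congl].
Qed.

Lemma nd_init_seg_disj_comp_e G x y s : incl seq_axioms G ->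
  nd (Eq y e :: G) (Imp (Eq (comp x y) (numeral s)) (init_seg_disj x s)).
Proof.
  intro HG. destruct s as [l]. apply nd_impI.
  apply nd_bigOr_intro with (Eq x (numeral (node l))).
  { apply (in_map (fun t => Eq x (numeral t))), init_segs_self. }
  apply nd_eq_trans with (comp x y); [|now apply nd_ax; left].
  apply nd_eq_sym, nd_eq_trans with (comp x e).
  - apply nd_comp_congr, nd_ax. now right; left.
  - now apply nd_Seq3, incl_tl, incl_tl.
Qed.

Lemma nd_init_seg_disj_of_comp l : forall G x y, incl seq_axioms G ->
  nd G (Imp (Eq (comp x y) (numeral (node l))) (init_seg_disj x (node l))).
Proof.
  induction l as [|a l IH] using rev_ind; intros G x y HG;
    (apply nd_Seq5_cases with y; [exact HG | now apply nd_init_seg_disj_comp_e |]);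
    cbn [fsubst tsubst]; rewrite !fsubst_init_seg_disj, !tsubst_numeral; apply nd_impI;
    set (x' := tsubst shift (tsubst shift x)); set (y' := tsubst shift (tsubst shift y));
    set (H := Eq (comp x' y') _ :: _);
    assert (HH : incl seq_axioms H)
      by apply incl_tl, incl_tl, incl_seq_axioms_shift, incl_seq_axioms_shift, HG;
    match goal with H := Eq _ ?n :: _ |- _ =>
      assert (Hpair : nd H (Eq (turn (comp x' (var 1)) (var 0)) n))
        by (apply nd_comp_turn_eq with y'; [exact HH | apply nd_ax; now right; left
                                            | apply nd_ax; now left])
    end.
  - apply nd_botE. eapply nd_impE; [apply nd_Seq1, HH | exact Hpair].
  - rewrite numeral_snoc in Hpair.
    apply init_seg_disj_snoc. eapply nd_impE; [now apply (IH H x' (var 1))|].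
    exact (nd_andE1 _ _ _ (nd_impE _ _ _ (nd_Seq2 _ HH _ _ _ _) Hpair)).
Qed.

Lemma nd_WSeq3 s : nd seq_axioms (WSeq3 s).
Proof.
  destruct s as [l]. unfold WSeq3. fold (init_seg_disj (var 0) (node l)).
  apply nd_allI. rewrite seq_axioms_shift. apply nd_impI.
  eapply nd_exE; [apply nd_ax; now left|].
  rewrite fsubst_init_seg_disj. eapply nd_impE; [apply nd_init_seg_disj_of_comp | apply nd_ax; now left].
  apply incl_tl, incl_seq_axioms_shift, incl_tl, incl_refl.
Qed.

Lemma nd_WSeqAx phi : WSeqAx phi -> nd seq_axioms phi.
Proof.
  intros [[s [t [Hst ->]]] | [[l1 [l2 ->]] | [s ->]]].
  - apply nd_WSeq1; [apply incl_refl | exact Hst].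
  - apply nd_WSeq2, incl_refl.
  - apply nd_WSeq3.
Qed.

Theorem theorem3 : forall phi : form, proves WSeqAx phi -> proves SeqAx phi.
Proof.
  intros phi [G [HW Hnd]]. exists seq_axioms. split.
  - intros psi H. unfold SeqAx. simpl in H. intuition.
  - apply nd_cut with G; [exact Hnd|]. intros psi Hpsi. now apply nd_WSeqAx, HW.
Qed.
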